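(* Consider the iterates $\{x(t)\}$ of the asynchronous network Newton method described in the context, with stepsize $\varepsilon$ satisfying $$0<\varepsilon\le 2\left(\frac{\lambda}{\Lambda}\right)^2 .$$ Then, with probability $1$, the sequence $\{F(x(t))\}$ converges to the optimal value $F^*=\min_{x\in\mathbb{R}^n}F(x)$.
   Context: Setup. Let $n\ge 1$ be the number of agents and $\alpha>0$ a scalar. $W\in\mathbb{R}^{n\times n}$ is a symmetric nonnegative matrix with $W\mathbb{1}=\mathbb{1}$ (where $\mathbb{1}$ is the all-ones vector), $\mathrm{null}(I-W)=\mathrm{span}\{\mathbb{1}\}$, $0\le W_{ij}<1$ for all $i,j$, and $\delta\le W_{ii}\le\Delta$ for all $i$, for constants $0<\delta\le\Delta<1$. Each $f_i:\mathbb{R}\to\mathbb{R}$ is twice continuously differentiable with $0<m\le f_i''(s)\le M<\infty$ for all $s$ and $|f_i''(a)-f_i''(b)|\le L|a-b|$ for all $a,b$. Define $F(x)=\frac12 x^T(I-W)x+\alpha\sum_{i=1}^n f_i(x_i)$ for $x\in\mathbb{R}^n$, with minimum value $F^*$ and minimizer $x^*$. Let $g(x)=\nabla F(x)$, $G(x)=\mathrm{diag}(f_1''(x_1),\dots,f_n''(x_n))$, $H(x)=\nabla^2F(x)=I-W+\alpha G(x)$. Let $W_d$ be the diagonal matrix with $[W_d]_{ii}=W_{ii}$, and set $D(x)=\alpha G(x)+2(I-W_d)$ (diagonal, positive definite) and $B=I-2W_d+W$, so $H(x)=D(x)-B$. Define the approximate Hessian inverse $\hat H(x)^{-1}=D(x)^{-1/2}\big(I+D(x)^{-1/2}BD(x)^{-1/2}\big)D(x)^{-1/2}$.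 Constants: $\rho=\frac{2(1-\delta)}{2(1-\delta)+\alpha m}$, $\Lambda=\frac{1+\rho}{2(1-\Delta)+\alpha m}$, $\lambda=\frac{1}{2(1-\delta)+\alpha M}$. Algorithm (asynchronous network Newton). Given $x(0)\in\mathbb{R}^n$ and stepsize $\varepsilon>0$, let $\Phi(1),\Phi(2),\dots$ be i.i.d. random diagonal $n\times n$ matrices, each equal to $e_ie_i^T$ (the matrix with a single $1$ in position $(i,i)$ and zeros elsewhere) with probability $1/n$ for each $i=1,\dots,n$ (i.e., one uniformly random agent is active per iteration). The iterates are $x(t)=x(t-1)-\varepsilon\,\Phi(t)\hat H(x(t-1))^{-1}g(x(t-1))$, $t\ge1$. Write $g(t)=g(x(t))$, $D(t)=D(x(t))$, $H(t)=H(x(t))$, $\hat H(t)^{-1}=\hat H(x(t))^{-1}$. $\mathcal{F}_t$ denotes the $\sigma$-field generated by $\Phi(1),\dots,\Phi(t)$ (so $x(t)$ is $\mathcal{F}_t$-measurable). *)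

(* classical reals. Vectors in R^n are functions nat -> R
   (only indices 0..n-1 matter); matrices are nat -> nat -> R. *)
From Stdlib Require Import Reals Lra Arith List.
Open Scope R_scope.

Fixpoint rsum (n : nat) (f : nat -> R) : R :=
  match n with O => 0 | S k => rsum k f + f k end.

Definition kron (i j : nat) : R := if Nat.eqb i j then 1 else 0.

Definition lapl (n : nat) (W : nat -> nat -> R) (x : nat -> R) (i : nat) : R :=
  x i - rsum n (fun j => W i j * x j).

Definition Fobj (n : nat) (W : nat -> nat -> R) (alpha : R)
  (f : nat -> R -> R) (x : nat -> R) : R :=
  / 2 * rsum n (fun i => x i * lapl n W x i) + alpha * rsum n (fun i => f i (x i)).

Definition gradF (n : nat) (W : nat -> nat -> R) (alpha : R)
  (df : nat -> R -> R) (x : nat -> R) (i : nat) : R :=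
  lapl n W x i + alpha * df i (x i).

Definition Ddiag (W : nat -> nat -> R) (alpha : R) (d2f : nat -> R -> R)
  (x : nat -> R) (i : nat) : R :=
  alpha * d2f i (x i) + 2 * (1 - W i i).

Definition Bmat (W : nat -> nat -> R) (i j : nat) : R :=
  kron i j - 2 * kron i j * W i i + W i j.

Definition Hhatinv (W : nat -> nat -> R) (alpha : R) (d2f : nat -> R -> R)
  (x : nat -> R) (i j : nat) : R :=
  let si := / sqrt (Ddiag W alpha d2f x i) in
  let sj := / sqrt (Ddiag W alpha d2f x j) in
  si * (kron i j + si * Bmat W i j * sj) * sj.

Definition newton_dir (n : nat) (W : nat -> nat -> R) (alpha : R)
  (df d2f : nat -> R -> R) (x : nat -> R) (i : nat) : R :=
  rsum n (fun j => Hhatinv W alpha d2f x i j * gradF n W alpha df x j).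

Definition ann_step (n : nat) (W : nat -> nat -> R) (alpha eps : R)
  (df d2f : nat -> R -> R) (x : nat -> R) (a : nat) : nat -> R :=
  fun j => if Nat.eqb j a then x j - eps * newton_dir n W alpha df d2f x j else x j.

(* Iterates: omega k is the agent active at iteration t = k+1
   (i.e. Phi(k+1) = e_{omega k} e_{omega k}^T). *)
Fixpoint ann_iter (n : nat) (W : nat -> nat -> R) (alpha eps : R)
  (df d2f : nat -> R -> R) (x0 : nat -> R) (omega : nat -> nat) (t : nat)
  : nat -> R :=
  match t with
  | O => x0
  | S k => ann_step n W alpha eps df d2f (ann_iter n W alpha eps df d2f x0 omega k) (omega k)
  end.

(* Sample space: sequences of agents in {0,..,n-1}, with the i.i.d. uniform
   product measure. A cylinder is determined by a finite prefix s and has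
   measure (1/n)^(length s). *)
Definition in_cyl (s : list nat) (omega : nat -> nat) : Prop :=
  forall k, (k < length s)%nat -> omega k = nth k s O.

(* Null set of the uniform product measure on {0..n-1}^N: for every eps > 0
   it can be covered by countably many cylinders of total measure <= eps
   (outer measure zero). *)
Definition unif_null (n : nat) (A : (nat -> nat) -> Prop) : Prop :=
  forall e : R, 0 < e ->
    exists c : nat -> list nat,
      (forall omega, (forall k, (omega k < n)%nat) -> A omega ->
         exists k, in_cyl (c k) omega) /\
      (forall N, rsum N (fun k => (/ INR n) ^ length (c k)) <= e).

Definition almost_surely (n : nat) (P : (nat -> nat) -> Prop) : Prop :=
  unif_null n (fun omega => ~ P omega).

(* Let V = F - F^*.  A step moves only the active agent's coordinate, so a second-order
   Taylor bound along that coordinate, averaged over the n equally likely agents, gives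
     E[V(x(t+1)) | x(t)] <= V(x(t)) - (eps / n) c |g(x(t))|^2,   c > 0,
   using g' \hat H^{-1} g >= lam |g|^2 (the matrix B is positive semidefinite) and
   |\hat H^{-1} g| <= Lam |g| (Schur test); the stepsize condition is exactly what makes
   the quadratic term lose against the linear one.  Strong convexity of F gives the
   Polyak-Lojasiewicz inequality |g|^2 >= 2 alpha m V, hence E[V(x(t+1))] <= r V(x(t)) with
   r < 1.  For r < th < 1, Markov's inequality bounds the probability of V(x(t)) > th^t by
   (r/th)^t V(x(0)), which is summable; by Borel-Cantelli, V(x(t)) <= th^t eventually, almost
   surely.  On the concrete sample space of agent sequences, the Borel-Cantelli step is an
   explicit cover of the divergence event by the cylinders of the offending path prefixes. *)

From Stdlib Require Import Reals Lra Lia List Classical.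
Open Scope R_scope.

Section FiniteSums.

Implicit Types (n : nat) (f g : nat -> R).

Lemma rsum_ext n f g : (forall i, (i < n)%nat -> f i = g i) -> rsum n f = rsum n g.
Proof.
  induction n as [|n IH]; intros H; simpl; [reflexivity|].
  rewrite IH, H; [reflexivity|lia|intros; apply H; lia].
Qed.

Lemma rsum_le n f g : (forall i, (i < n)%nat -> f i <= g i) -> rsum n f <= rsum n g.
Proof.
  induction n as [|n IH]; intros H; simpl; [lra|].
  pose proof (IH (fun i Hi => H i ltac:(lia))); pose proof (H n ltac:(lia)); lra.
Qed.

Lemma rsum_zero n : rsum n (fun _ => 0) = 0.
Proof. induction n as [|n IH]; simpl; [|rewrite IH]; lra. Qed.

Lemma rsum_nonneg n f : (forall i, (i < n)%nat -> 0 <= f i) -> 0 <= rsum n f.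
Proof. intros H; rewrite <- (rsum_zero n); apply rsum_le, H. Qed.

Lemma rsum_plus n f g : rsum n (fun i => f i + g i) = rsum n f + rsum n g.
Proof. induction n as [|n IH]; simpl; [|rewrite IH]; lra. Qed.

Lemma rsum_minus n f g : rsum n (fun i => f i - g i) = rsum n f - rsum n g.
Proof. induction n as [|n IH]; simpl; [|rewrite IH]; lra. Qed.

Lemma rsum_scal_l n c f : rsum n (fun i => c * f i) = c * rsum n f.
Proof. induction n as [|n IH]; simpl; [|rewrite IH]; lra. Qed.

Lemma rsum_scal_r n c f : rsum n (fun i => f i * c) = rsum n f * c.
Proof. induction n as [|n IH]; simpl; [|rewrite IH]; lra. Qed.

Lemma rsum_const n c : rsum n (fun _ => c) = INR n * c.
Proof. induction n as [|n IH]; cbn [rsum]; [simpl|rewrite IH, S_INR]; ring. Qed.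

Lemma rsum_swap n k (h : nat -> nat -> R) :
  rsum n (fun i => rsum k (fun j => h i j)) = rsum k (fun j => rsum n (fun i => h i j)).
Proof.
  induction n as [|n IH]; simpl; [now rewrite rsum_zero|].
  now rewrite IH, <- rsum_plus.
Qed.

Lemma rsum_single n a f : (a < n)%nat ->
  (forall i, (i < n)%nat -> i <> a -> f i = 0) -> rsum n f = f a.
Proof.
  induction n as [|n IH]; intros Ha H; simpl; [lia|].
  destruct (Nat.eq_dec n a) as [->|Hna].
  - rewrite (rsum_ext _ _ (fun _ => 0)), rsum_zero; [lra|].
    intros i Hi; apply H; lia.
  - rewrite IH, (H n); [lra|lia|lia|lia|intros; apply H; lia].
Qed.

Lemma rsum_kron n a h : (a < n)%nat -> rsum n (fun j => kron a j * h j) = h a.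
Proof.
  intros Ha; rewrite (rsum_single n a); auto.
  - unfold kron; rewrite Nat.eqb_refl; ring.
  - intros i _ Hi; unfold kron; rewrite (proj2 (Nat.eqb_neq a i)) by lia; ring.
Qed.

Lemma rsum_term_le n f a : (a < n)%nat -> (forall i, (i < n)%nat -> 0 <= f i) ->
  f a <= rsum n f.
Proof.
  intros Ha H.
  transitivity (rsum n (fun i => if Nat.eq_dec i a then f i else 0)).
  - rewrite (rsum_single n a); auto.
    + destruct (Nat.eq_dec a a); [lra|contradiction].
    + intros i _ Hi; destruct (Nat.eq_dec i a); [contradiction|reflexivity].
  - apply rsum_le; intros i Hi; destruct (Nat.eq_dec i a); [lra|auto].
Qed.

Lemma rsum_add a b f : rsum (a + b) f = rsum a f + rsum b (fun j => f (a + j)%nat).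
Proof.
  induction b as [|b IH]; simpl; [rewrite Nat.add_0_r; lra|].
  rewrite Nat.add_succ_r; simpl; rewrite IH; lra.
Qed.

Lemma rsum_mul a b f :
  rsum (a * b) f = rsum a (fun i => rsum b (fun j => f (i * b + j)%nat)).
Proof. induction a as [|a IH]; simpl; [reflexivity|]. now rewrite Nat.add_comm, rsum_add, IH. Qed.

Lemma rsum_le_len N N' f : (N <= N')%nat -> (forall i, 0 <= f i) -> rsum N f <= rsum N' f.
Proof.
  intros H Hf; replace N' with (N + (N' - N))%nat by lia; rewrite rsum_add.
  pose proof (rsum_nonneg (N' - N) (fun j => f (N + j)%nat) (fun i _ => Hf _)); lra.
Qed.

Lemma rsum_geom_le q N : 0 <= q < 1 -> rsum N (fun u => q ^ u) <= / (1 - q).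
Proof.
  intros Hq.
  assert (E : rsum N (fun u => q ^ u) * (1 - q) = 1 - q ^ N).
  { induction N as [|N IH]; simpl; [ring|]. rewrite Rmult_plus_distr_r, IH; ring. }
  pose proof (pow_le q N ltac:(lra)).
  apply (Rmult_le_reg_r (1 - q)); [lra|]. rewrite Rinv_l by lra; lra.
Qed.

End FiniteSums.

Lemma rsum_cauchy_schwarz_weighted n Q g : (forall j, (j < n)%nat -> 0 <= Q j) ->
  (rsum n (fun j => Q j * g j)) ^ 2 <= rsum n Q * rsum n (fun j => Q j * g j ^ 2).
Proof.
  intros HQ.
  set (S := rsum n Q); set (A := rsum n (fun j => Q j * g j ^ 2));
    set (B := rsum n (fun j => Q j * g j)).
  (* Lagrange's identity: the double sum below equals 2 (S A - B^2). *)
  assert (Hpos : 0 <= rsum n (fun i => rsum n (fun j => Q i * Q j * (g i - g j) ^ 2))).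
  { apply rsum_nonneg; intros i Hi; apply rsum_nonneg; intros j Hj.
    pose proof (HQ i Hi); pose proof (HQ j Hj); pose proof (pow2_ge_0 (g i - g j)).
    apply Rmult_le_pos; [apply Rmult_le_pos|]; auto. }
  assert (E : rsum n (fun i => rsum n (fun j => Q i * Q j * (g i - g j) ^ 2))
              = 2 * (S * A - B ^ 2)).
  { rewrite (rsum_ext _ _ (fun i => Q i * g i ^ 2 * S - 2 * (Q i * g i) * B + Q i * A)).
    - rewrite rsum_plus, rsum_minus, !rsum_scal_r, rsum_scal_l; unfold S, A, B; simpl; ring.
    - intros i Hi; unfold S, A, B; rewrite <- !rsum_scal_l, <- rsum_minus, <- rsum_plus.
      apply rsum_ext; intros; ring. }
  lra.
Qed.

Lemma schur_test n (Q : nat -> nat -> R) (c : R) g :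
  (forall i j, (i < n)%nat -> (j < n)%nat -> 0 <= Q i j) ->
  (forall i j, (i < n)%nat -> (j < n)%nat -> Q i j = Q j i) ->
  (forall i, (i < n)%nat -> rsum n (Q i) <= c) ->
  rsum n (fun a => (rsum n (fun j => Q a j * g j)) ^ 2) <= c ^ 2 * rsum n (fun j => g j ^ 2).
Proof.
  intros Hpos Hsym Hrow.
  destruct n as [|n']; [simpl; lra|].
  assert (Hc : 0 <= c).
  { eapply Rle_trans; [apply rsum_nonneg|apply (Hrow O)]; intros; try apply Hpos; lia. }
  apply Rle_trans with (rsum (S n') (fun a => c * rsum (S n') (fun j => Q a j * g j ^ 2))).
  { apply rsum_le; intros a Ha.
    eapply Rle_trans; [apply rsum_cauchy_schwarz_weighted; intros; apply Hpos; auto|].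
    apply Rmult_le_compat_r; auto.
    apply rsum_nonneg; intros j Hj.
    pose proof (Hpos a j Ha Hj); pose proof (pow2_ge_0 (g j)); nra. }
  rewrite rsum_scal_l, rsum_swap.
  replace (c ^ 2 * rsum (S n') (fun j => g j ^ 2))
    with (c * rsum (S n') (fun j => g j ^ 2 * c)) by (rewrite rsum_scal_r; ring).
  apply Rmult_le_compat_l; auto; apply rsum_le; intros j Hj.
  rewrite (rsum_ext _ _ (fun i => g j ^ 2 * Q j i)), rsum_scal_l
    by (intros; rewrite Hsym; auto; ring).
  apply Rmult_le_compat_l; [apply pow2_ge_0|auto].
Qed.

Definition wform n (W : nat -> nat -> R) (u v : nat -> R) : R :=
  rsum n (fun i => rsum n (fun j => W i j * u i * v j)).

Definition lapl_form n (W : nat -> nat -> R) (x y : nat -> R) : R :=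
  rsum n (fun i => x i * lapl n W y i).

Lemma lapl_form_eq n W x y :
  lapl_form n W x y = rsum n (fun i => x i * y i) - wform n W x y.
Proof.
  unfold lapl_form, wform, lapl; rewrite <- rsum_minus; apply rsum_ext; intros i _.
  rewrite Rmult_minus_distr_l, <- rsum_scal_l; f_equal; apply rsum_ext; intros; ring.
Qed.

Lemma lapl_add n W x h y i : (forall j, (j < n)%nat -> y j = x j + h j) -> (i < n)%nat ->
  lapl n W y i = lapl n W x i + lapl n W h i.
Proof.
  intros Hy Hi; unfold lapl.
  rewrite (rsum_ext _ _ (fun j => W i j * x j + W i j * h j)), rsum_plus, Hy
    by (auto; intros; rewrite Hy; auto; ring).
  ring.
Qed.

Section StochasticMatrix.

Variables (n : nat) (W : nat -> nat -> R).
Hypothesis W_sym : forall i j, (i < n)%nat -> (j < n)%nat -> W i j = W j i.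
Hypothesis W_nonneg : forall i j, (i < n)%nat -> (j < n)%nat -> 0 <= W i j.
Hypothesis W_rowsum : forall i, (i < n)%nat -> rsum n (fun j => W i j) = 1.

Lemma wform_sym u v : wform n W u v = wform n W v u.
Proof.
  unfold wform; rewrite rsum_swap.
  apply rsum_ext; intros i Hi; apply rsum_ext; intros j Hj; rewrite W_sym; auto; ring.
Qed.

Lemma wform_shift_expand u s :
  rsum n (fun a => rsum n (fun j => W a j * (u a + s * u j) ^ 2)) =
  (1 + s ^ 2) * rsum n (fun a => u a ^ 2) + 2 * s * wform n W u u.
Proof.
  unfold wform.
  rewrite (rsum_ext _ _ (fun a => u a ^ 2 * rsum n (fun j => W a j)
                                 + 2 * s * rsum n (fun j => W a j * u a * u j)
                                 + s ^ 2 * rsum n (fun j => W a j * u j ^ 2))).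
  2:{ intros a _; rewrite <- !rsum_scal_l, <- !rsum_plus; apply rsum_ext; intros; ring. }
  rewrite !rsum_plus, rsum_scal_l, (rsum_scal_l n (s ^ 2)).
  rewrite (rsum_swap n n (fun i j => W i j * u j ^ 2)).
  rewrite (rsum_ext _ (fun j => rsum n (fun i => W i j * u j ^ 2)) (fun j => u j ^ 2)).
  - rewrite (rsum_ext _ (fun a => u a ^ 2 * rsum n (fun j => W a j)) (fun a => u a ^ 2)).
    + ring.
    + intros a Ha; rewrite W_rowsum; auto; ring.
  - intros j Hj; rewrite rsum_scal_r, (rsum_ext _ _ (W j)) by (intros; apply W_sym; auto).
    rewrite W_rowsum by auto; ring.
Qed.

Lemma wform_le_sqnorm u : wform n W u u <= rsum n (fun a => u a ^ 2).
Proof.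
  pose proof (wform_shift_expand u (-1)) as E.
  assert (0 <= rsum n (fun a => rsum n (fun j => W a j * (u a + -1 * u j) ^ 2))).
  { apply rsum_nonneg; intros a Ha; apply rsum_nonneg; intros j Hj.
    apply Rmult_le_pos; [auto|apply pow2_ge_0]. }
  lra.
Qed.

Lemma wform_ge_diag u : rsum n (fun a => (2 * W a a - 1) * u a ^ 2) <= wform n W u u.
Proof.
  pose proof (wform_shift_expand u 1) as E.
  (* keep only the diagonal terms [j = a] of the expanded double sum *)
  assert (H : rsum n (fun a => 4 * (W a a * u a ^ 2))
              <= rsum n (fun a => rsum n (fun j => W a j * (u a + 1 * u j) ^ 2))).
  { apply rsum_le; intros a Ha.
    replace (4 * (W a a * u a ^ 2)) with (W a a * (u a + 1 * u a) ^ 2) by ring.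
    apply (rsum_term_le n (fun j => W a j * (u a + 1 * u j) ^ 2) a Ha).
    intros; apply Rmult_le_pos; [auto|apply pow2_ge_0]. }
  rewrite rsum_scal_l in H.
  rewrite (rsum_ext _ _ (fun a => 2 * (W a a * u a ^ 2) - u a ^ 2)), rsum_minus, rsum_scal_l
    by (intros; ring).
  lra.
Qed.

Lemma lapl_form_sym x y : lapl_form n W x y = lapl_form n W y x.
Proof.
  rewrite !lapl_form_eq, wform_sym; f_equal; apply rsum_ext; intros; ring.
Qed.

Lemma lapl_form_nonneg h : 0 <= lapl_form n W h h.
Proof.
  rewrite lapl_form_eq; pose proof (wform_le_sqnorm h).
  rewrite (rsum_ext _ (fun i => h i * h i) (fun i => h i ^ 2)) by (intros; ring); lra.
Qed.

Lemma Bmat_sym i j : (i < n)%nat -> (j < n)%nat -> Bmat W i j = Bmat W j i.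
Proof.
  intros Hi Hj; unfold Bmat, kron; rewrite (Nat.eqb_sym j i).
  destruct (Nat.eqb_spec i j) as [->|_]; [ring|rewrite (W_sym i j Hi Hj); ring].
Qed.

Lemma Bmat_nonneg i j : (i < n)%nat -> (j < n)%nat -> W i i < 1 -> 0 <= Bmat W i j.
Proof.
  intros Hi Hj Hii; pose proof (W_nonneg i j Hi Hj); unfold Bmat, kron.
  destruct (Nat.eqb_spec i j) as [->|_]; lra.
Qed.

Lemma Bmat_rowsum i : (i < n)%nat -> rsum n (fun j => Bmat W i j) = 2 * (1 - W i i).
Proof.
  intros Hi; unfold Bmat.
  rewrite (rsum_ext _ _ (fun j => kron i j * (1 - 2 * W i i) + W i j)) by (intros; ring).
  rewrite rsum_plus, rsum_kron, W_rowsum by auto; ring.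
Qed.

(* [B = I - 2 W_d + W] is positive semidefinite because [W + I] dominates [2 W_d]. *)
Lemma Bmat_form_nonneg u : 0 <= rsum n (fun a => rsum n (fun j => Bmat W a j * u a * u j)).
Proof.
  pose proof (wform_ge_diag u); unfold wform in *.
  rewrite (rsum_ext _ _ (fun a => (1 - 2 * W a a) * u a ^ 2
                                  + rsum n (fun j => W a j * u a * u j))), rsum_plus.
  - rewrite (rsum_ext _ (fun a => (1 - 2 * W a a) * u a ^ 2)
               (fun a => - 1 * ((2 * W a a - 1) * u a ^ 2))), rsum_scal_l by (intros; ring).
    lra.
  - intros a Ha; unfold Bmat.
    rewrite (rsum_ext _ _ (fun j => kron a j * ((1 - 2 * W a a) * u a * u j)
                                    + W a j * u a * u j)) by (intros; ring).
    rewrite rsum_plus, rsum_kron by auto; ring.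
Qed.

End StochasticMatrix.

Lemma le_of_derive_nonpos g g' a b : (forall t, derivable_pt_lim g t (g' t)) ->
  (forall t, a < t < b -> g' t <= 0) -> a <= b -> g b <= g a.
Proof.
  intros Hd Hsign Hab; destruct (Req_dec a b) as [->|Hne]; [lra|].
  set (pr := fun t => exist (fun l => derivable_pt_abs g t l) (g' t) (Hd t) : derivable_pt g t).
  destruct (MVT_cor1 g a b pr ltac:(lra)) as [c [Hc Hcab]].
  rewrite (derive_pt_eq_0 g c (g' c) (pr c) (Hd c)) in Hc.
  pose proof (Hsign c Hcab); nra.
Qed.

Lemma le_of_derive_nonneg g g' a b : (forall t, derivable_pt_lim g t (g' t)) ->
  (forall t, a < t < b -> 0 <= g' t) -> a <= b -> g a <= g b.
Proof.
  intros Hd Hsign Hab.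
  enough (- g b <= - g a) by lra.
  apply (le_of_derive_nonpos (fun s => - g s) (fun s => - g' s)); auto.
  - intros t; apply derivable_pt_lim_opp, Hd.
  - intros t Ht; pose proof (Hsign t Ht); lra.
Qed.

Lemma derivable_pt_lim_sub_const_affine (h : R -> R) h' c x0 t :
  derivable_pt_lim h t h' -> derivable_pt_lim (fun s => h s - c * (s - x0)) t (h' - c).
Proof.
  intros H; replace (h' - c) with (h' - c * (1 - 0)) by ring.
  apply (derivable_pt_lim_minus h (fun s => c * (s - x0))); auto.
  apply (derivable_pt_lim_scal (fun s => s - x0)).
  apply (derivable_pt_lim_minus id (fun _ => x0));
    [apply derivable_pt_lim_id|apply derivable_pt_lim_const].
Qed.

Lemma taylor_upper_bound f df d2f hi x y :
  (forall s, derivable_pt_lim f s (df s)) -> (forall s, derivable_pt_lim df s (d2f s)) ->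
  (forall s, d2f s <= hi) ->
  f y <= f x + df x * (y - x) + hi / 2 * (y - x) ^ 2.
Proof.
  intros Hf Hdf Hhi.
  (* [phi' = psi] and [psi' = d2f - hi <= 0]; both vanish at [x], so [phi <= 0]. *)
  set (psi := fun t => df t - df x - hi * (t - x)).
  set (phi := fun t => f t - f x - df x * (t - x) - hi / 2 * (t - x) ^ 2).
  assert (Hpsi : forall t, derivable_pt_lim psi t (d2f t - hi)).
  { intros t; apply derivable_pt_lim_sub_const_affine.
    replace (d2f t) with (d2f t - 0) by ring.
    apply (derivable_pt_lim_minus df (fun _ => df x)); [auto|apply derivable_pt_lim_const]. }
  assert (Hphi : forall t, derivable_pt_lim phi t (psi t)).
  { intros t; unfold phi, psi.
    replace (df t - df x - hi * (t - x))
      with (df t - 0 - df x - hi / 2 * (INR 2 * (t - x) ^ pred 2 * (1 - 0))) by (simpl; field).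
    apply (derivable_pt_lim_minus (fun s => f s - f x - df x * (s - x))
             (fun s => hi / 2 * (s - x) ^ 2)).
    - apply derivable_pt_lim_sub_const_affine.
      apply (derivable_pt_lim_minus f (fun _ => f x)); [auto|apply derivable_pt_lim_const].
    - apply (derivable_pt_lim_scal (fun s => (s - x) ^ 2)).
      apply (derivable_pt_lim_comp (fun s => s - x) (fun u => u ^ 2)).
      + apply (derivable_pt_lim_minus id (fun _ => x));
          [apply derivable_pt_lim_id|apply derivable_pt_lim_const].
      + apply derivable_pt_lim_pow. }
  assert (Hpsi_dec : forall a b, a <= b -> psi b <= psi a).
  { intros a b Hab; apply (le_of_derive_nonpos psi (fun t => d2f t - hi)); auto.
    intros t _; pose proof (Hhi t); lra. }
  assert (Hpsi0 : psi x = 0) by (unfold psi; ring).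
  assert (phi y <= phi x).
  { destruct (Rle_dec x y).
    - apply (le_of_derive_nonpos phi psi); auto.
      intros t Ht; rewrite <- Hpsi0; apply Hpsi_dec; lra.
    - apply (le_of_derive_nonneg phi psi); [auto| |lra].
      intros t Ht; rewrite <- Hpsi0; apply Hpsi_dec; lra. }
  unfold phi in H; lra.
Qed.

Lemma taylor_lower_bound f df d2f lo x y :
  (forall s, derivable_pt_lim f s (df s)) -> (forall s, derivable_pt_lim df s (d2f s)) ->
  (forall s, lo <= d2f s) ->
  f x + df x * (y - x) + lo / 2 * (y - x) ^ 2 <= f y.
Proof.
  intros Hf Hdf Hlo.
  pose proof (taylor_upper_bound (fun s => - f s) (fun s => - df s) (fun s => - d2f s) (- lo) x y
    (fun s => derivable_pt_lim_opp f s (df s) (Hf s))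
    (fun s => derivable_pt_lim_opp df s (d2f s) (Hdf s))
    ltac:(intros s; pose proof (Hlo s); lra)).
  simpl in H; lra.
Qed.

Lemma quadratic_ge_neg_sq_div c g h : 0 < c -> - (g ^ 2 / (2 * c)) <= g * h + c / 2 * h ^ 2.
Proof.
  intros Hc.
  replace (g * h + c / 2 * h ^ 2) with ((c * h + g) ^ 2 / (2 * c) - g ^ 2 / (2 * c))
    by (field; lra).
  enough (0 <= (c * h + g) ^ 2 / (2 * c)) by lra.
  apply Rmult_le_pos; [apply pow2_ge_0|apply Rlt_le, Rinv_0_lt_compat; lra].
Qed.

Section NetworkObjective.

Variables (n : nat) (W : nat -> nat -> R) (alpha : R) (f df d2f : nat -> R -> R) (m M : R).
Hypothesis W_sym : forall i j, (i < n)%nat -> (j < n)%nat -> W i j = W j i.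
Hypothesis W_nonneg : forall i j, (i < n)%nat -> (j < n)%nat -> 0 <= W i j.
Hypothesis W_rowsum : forall i, (i < n)%nat -> rsum n (fun j => W i j) = 1.
Hypothesis alpha_pos : 0 < alpha.
Hypothesis f_deriv : forall i s, (i < n)%nat -> derivable_pt_lim (f i) s (df i s).
Hypothesis df_deriv : forall i s, (i < n)%nat -> derivable_pt_lim (df i) s (d2f i s).
Hypothesis m_pos : 0 < m.
Hypothesis d2f_bound : forall i s, (i < n)%nat -> m <= d2f i s <= M.

Local Notation F := (Fobj n W alpha f).
Local Notation grad := (gradF n W alpha df).

Lemma Fobj_expand x y h : (forall j, (j < n)%nat -> y j = x j + h j) ->
  F y = F x + rsum n (fun i => h i * lapl n W x i) + / 2 * lapl_form n W h h
        + alpha * rsum n (fun i => f i (y i) - f i (x i)).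
Proof.
  intros Hy; unfold Fobj; rewrite rsum_minus.
  assert (E : rsum n (fun i => y i * lapl n W y i)
              = rsum n (fun i => x i * lapl n W x i) + lapl_form n W h x
                + rsum n (fun i => h i * lapl n W x i) + lapl_form n W h h).
  { rewrite (lapl_form_sym n W W_sym h x); unfold lapl_form; rewrite <- !rsum_plus.
    apply rsum_ext; intros i Hi; rewrite (lapl_add n W x h y i Hy Hi), Hy by auto; ring. }
  rewrite E; unfold lapl_form; field.
Qed.

Lemma Fobj_ge_quadratic x y :
  F x + rsum n (fun i => grad x i * (y i - x i) + alpha * m / 2 * (y i - x i) ^ 2) <= F y.
Proof.
  rewrite (Fobj_expand x y (fun i => y i - x i)) by (intros; ring).
  pose proof (lapl_form_nonneg n W W_sym W_nonneg W_rowsum (fun i => y i - x i)).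
  assert (rsum n (fun i => df i (x i) * (y i - x i) + m / 2 * (y i - x i) ^ 2)
          <= rsum n (fun i => f i (y i) - f i (x i))).
  { apply rsum_le; intros i Hi.
    pose proof (taylor_lower_bound (f i) (df i) (d2f i) m (x i) (y i) (fun s => f_deriv i s Hi)
                  (fun s => df_deriv i s Hi) (fun s => proj1 (d2f_bound i s Hi))); lra. }
  unfold gradF.
  rewrite (rsum_ext _ _ (fun i => (y i - x i) * lapl n W x i
              + alpha * (df i (x i) * (y i - x i) + m / 2 * (y i - x i) ^ 2))) by (intros; field).
  rewrite rsum_plus, rsum_scal_l; nra.
Qed.

(* Polyak-Lojasiewicz inequality: minimise the quadratic lower bound over [y]. *)
Lemma Fobj_gap_le_grad_sqnorm x y :
  F x - F y <= / (2 * (alpha * m)) * rsum n (fun i => grad x i ^ 2).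
Proof.
  pose proof (Fobj_ge_quadratic x y).
  enough (- (/ (2 * (alpha * m)) * rsum n (fun i => grad x i ^ 2))
          <= rsum n (fun i => grad x i * (y i - x i) + alpha * m / 2 * (y i - x i) ^ 2)) by lra.
  rewrite <- rsum_scal_l, <- (Rmult_1_l (rsum _ _)), Ropp_mult_distr_l, <- rsum_scal_l.
  apply rsum_le; intros i _.
  pose proof (quadratic_ge_neg_sq_div (alpha * m) (grad x i) (y i - x i) ltac:(nra)).
  unfold Rdiv in *; lra.
Qed.

Lemma Fobj_step_le eps x a : (a < n)%nat ->
  let d := newton_dir n W alpha df d2f x a in
  F (ann_step n W alpha eps df d2f x a)
  <= F x - eps * d * grad x a + eps ^ 2 * d ^ 2 * (1 - W a a + alpha * M) / 2.
Proof.
  intros Ha d.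
  set (h := fun i => if Nat.eqb i a then - eps * d else 0).
  assert (Hh : forall i, (i < n)%nat -> i <> a -> h i = 0)
    by (intros i _ Hi; unfold h; rewrite (proj2 (Nat.eqb_neq i a) Hi); reflexivity).
  assert (Hha : h a = - eps * d) by (unfold h; rewrite Nat.eqb_refl; reflexivity).
  assert (Hy : forall j, (j < n)%nat -> ann_step n W alpha eps df d2f x a j = x j + h j).
  { intros j _; unfold ann_step, h; destruct (Nat.eqb_spec j a) as [->|_]; unfold d; ring. }
  rewrite (Fobj_expand x _ h Hy).
  assert (Hlh : lapl n W h a = - eps * d - W a a * (- eps * d)).
  { unfold lapl; rewrite (rsum_single n a), Hha; auto.
    intros i Hi Hia; rewrite Hh; auto; ring. }
  unfold lapl_form.
  rewrite (rsum_single n a (fun i => h i * lapl n W x i)),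
    (rsum_single n a (fun i => h i * lapl n W h i)),
    (rsum_single n a (fun i => f i (ann_step n W alpha eps df d2f x a i) - f i (x i)));
    auto; try (intros i Hi Hia; rewrite ?Hh, ?Hy, ?Hh, ?Rplus_0_r; auto; ring).
  rewrite Hy, Hlh, Hha by auto.
  pose proof (taylor_upper_bound (f a) (df a) (d2f a) M (x a) (x a + - eps * d)
    (fun s => f_deriv a s Ha) (fun s => df_deriv a s Ha) (fun s => proj2 (d2f_bound a s Ha))).
  replace (x a + - eps * d - x a) with (- eps * d) in H by ring.
  unfold gradF; nra.
Qed.

End NetworkObjective.

Section NewtonDirection.

Variables (n : nat) (W : nat -> nat -> R) (alpha : R) (d2f : nat -> R -> R).
Variables (delta Delta m M : R).
Hypothesis W_sym : forall i j, (i < n)%nat -> (j < n)%nat -> W i j = W j i.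
Hypothesis W_nonneg : forall i j, (i < n)%nat -> (j < n)%nat -> 0 <= W i j.
Hypothesis W_rowsum : forall i, (i < n)%nat -> rsum n (fun j => W i j) = 1.
Hypothesis W_diag : forall i, (i < n)%nat -> delta <= W i i <= Delta.
Hypothesis Delta_lt_1 : Delta < 1.
Hypothesis alpha_pos : 0 < alpha.
Hypothesis m_pos : 0 < m.
Hypothesis d2f_bound : forall i s, (i < n)%nat -> m <= d2f i s <= M.

Local Notation D := (Ddiag W alpha d2f).

Lemma Ddiag_ge x i : (i < n)%nat -> 2 * (1 - W i i) + alpha * m <= D x i.
Proof. intros Hi; pose proof (d2f_bound i (x i) Hi); unfold Ddiag; nra. Qed.

Lemma Ddiag_le x i : (i < n)%nat -> D x i <= 2 * (1 - delta) + alpha * M.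
Proof.
  intros Hi; pose proof (d2f_bound i (x i) Hi); pose proof (W_diag i Hi); unfold Ddiag; nra.
Qed.

Lemma Ddiag_pos x i : (i < n)%nat -> 0 < D x i.
Proof.
  intros Hi; pose proof (Ddiag_ge x i Hi); pose proof (W_diag i Hi).
  assert (0 < alpha * m) by nra; lra.
Qed.

Lemma Hhatinv_eq x i j : (i < n)%nat -> (j < n)%nat ->
  Hhatinv W alpha d2f x i j = kron i j * / D x i + Bmat W i j * (/ D x i * / D x j).
Proof.
  intros Hi Hj; pose proof (Ddiag_pos x i Hi); pose proof (Ddiag_pos x j Hj).
  assert (Hsq : forall z, 0 < z -> / sqrt z * / sqrt z = / z)
    by (intros z Hz; rewrite <- Rinv_mult, sqrt_sqrt; lra).
  unfold Hhatinv; cbv zeta; rewrite <- (Hsq (D x i)), <- (Hsq (D x j)) by auto.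
  unfold kron; destruct (Nat.eqb_spec i j) as [->|_]; ring.
Qed.

Lemma newton_dir_inner_ge x g :
  / (2 * (1 - delta) + alpha * M) * rsum n (fun a => g a ^ 2)
  <= rsum n (fun a => g a * rsum n (fun j => Hhatinv W alpha d2f x a j * g j)).
Proof.
  set (u := fun i => g i * / D x i).
  rewrite (rsum_ext _ (fun a => g a * _)
             (fun a => g a ^ 2 * / D x a + rsum n (fun j => Bmat W a j * u a * u j))).
  2:{ intros a Ha; rewrite <- rsum_scal_l.
      rewrite (rsum_ext _ _ (fun j => kron a j * (g a * g j * / D x a) + Bmat W a j * u a * u j)).
      - rewrite rsum_plus, rsum_kron by auto; ring.
      - intros j Hj; rewrite Hhatinv_eq by auto; unfold u; ring. }
  rewrite rsum_plus, <- rsum_scal_l.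
  pose proof (Bmat_form_nonneg n W W_sym W_nonneg W_rowsum u).
  enough (rsum n (fun i => / (2 * (1 - delta) + alpha * M) * g i ^ 2)
          <= rsum n (fun a => g a ^ 2 * / D x a)) by lra.
  apply rsum_le; intros i Hi; rewrite Rmult_comm.
  apply Rmult_le_compat_l; [apply pow2_ge_0|].
  apply Rinv_le_contravar; [apply Ddiag_pos|apply Ddiag_le]; auto.
Qed.

Lemma Hhatinv_nonneg x i j : (i < n)%nat -> (j < n)%nat -> 0 <= Hhatinv W alpha d2f x i j.
Proof.
  intros Hi Hj; rewrite Hhatinv_eq by auto.
  pose proof (Rinv_0_lt_compat _ (Ddiag_pos x i Hi));
    pose proof (Rinv_0_lt_compat _ (Ddiag_pos x j Hj)).
  pose proof (W_diag i Hi); pose proof (Bmat_nonneg n W W_nonneg i j Hi Hj ltac:(lra)).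
  assert (0 <= kron i j) by (unfold kron; destruct (Nat.eqb i j); lra).
  apply Rplus_le_le_0_compat; apply Rmult_le_pos; try lra; apply Rmult_le_pos; lra.
Qed.

Lemma Hhatinv_sym x i j : (i < n)%nat -> (j < n)%nat ->
  Hhatinv W alpha d2f x i j = Hhatinv W alpha d2f x j i.
Proof.
  intros Hi Hj; rewrite !Hhatinv_eq, (Bmat_sym n W W_sym i j) by auto.
  unfold kron; rewrite (Nat.eqb_sym j i); destruct (Nat.eqb_spec i j) as [->|_]; ring.
Qed.

Lemma Hhatinv_rowsum_eq x i : (i < n)%nat ->
  rsum n (Hhatinv W alpha d2f x i) = (1 + rsum n (fun j => Bmat W i j * / D x j)) / D x i.
Proof.
  intros Hi; pose proof (Ddiag_pos x i Hi).
  rewrite (rsum_ext _ _ (fun j => kron i j * / D x i + Bmat W i j * / D x j * / D x i)).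
  - rewrite rsum_plus, rsum_scal_r, rsum_scal_r.
    rewrite (rsum_ext _ (fun j => kron i j) (fun j => kron i j * 1)) by (intros; ring).
    rewrite rsum_kron by auto; field; lra.
  - intros j Hj; rewrite Hhatinv_eq by auto; ring.
Qed.

Lemma Bmat_scaled_rowsum_le x i : (i < n)%nat ->
  rsum n (fun j => Bmat W i j * / D x j) <= 2 * (1 - W i i) / (2 * (1 - Delta) + alpha * m).
Proof.
  intros Hi; assert (0 < alpha * m) by nra.
  rewrite <- (Bmat_rowsum n W W_rowsum i Hi), Rdiv_def, <- rsum_scal_r.
  apply rsum_le; intros j Hj; apply Rmult_le_compat_l.
  - apply (Bmat_nonneg n W W_nonneg); auto; pose proof (W_diag i Hi); lra.
  - pose proof (Ddiag_ge x j Hj); pose proof (W_diag j Hj).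
    apply Rinv_le_contravar; lra.
Qed.

Lemma Hhatinv_rowsum_le x i : (i < n)%nat ->
  let rho := 2 * (1 - delta) / (2 * (1 - delta) + alpha * m) in
  rsum n (Hhatinv W alpha d2f x i) <= (1 + rho) / (2 * (1 - Delta) + alpha * m).
Proof.
  intros Hi rho.
  pose proof (Hhatinv_rowsum_eq x i Hi) as Hsum; pose proof (Bmat_scaled_rowsum_le x i Hi).
  pose proof (Ddiag_ge x i Hi); pose proof (W_diag i Hi).
  set (Dmin := 2 * (1 - Delta) + alpha * m) in *; set (w := W i i) in *; set (Di := D x i) in *.
  assert (Ham : 0 < alpha * m) by nra.
  assert (HDmin : 0 < Dmin) by (unfold Dmin; lra).
  assert (HDi : Dmin <= Di) by (unfold Dmin; lra).
  (* [2 (1 - w) <= rho (alpha m + 2 (1 - w))] because [t / (alpha m + t)] increases in [t]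
     and [1 - w <= 1 - delta] *)
  assert (Hrho : 2 * (1 - w) <= rho * Di).
  { apply Rle_trans with (rho * (alpha * m + 2 * (1 - w))).
    - unfold rho; apply (Rmult_le_reg_l (2 * (1 - delta) + alpha * m)); [lra|].
      field_simplify; [nra|lra].
    - apply Rmult_le_compat_l; [unfold rho; apply Rlt_le, Rdiv_lt_0_compat|]; lra. }
  rewrite Hsum; apply Rle_trans with ((1 + 2 * (1 - w) / Dmin) / Di).
  { apply Rmult_le_compat_r; [apply Rlt_le, Rinv_0_lt_compat|]; lra. }
  apply (Rmult_le_reg_l (Di * Dmin)); [nra|].
  replace (Di * Dmin * ((1 + 2 * (1 - w) / Dmin) / Di)) with (Dmin + 2 * (1 - w))
    by (field; lra).
  replace (Di * Dmin * ((1 + rho) / Dmin)) with (Di + rho * Di) by (field; lra).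
  lra.
Qed.

Lemma newton_dir_sqnorm_le x g :
  let rho := 2 * (1 - delta) / (2 * (1 - delta) + alpha * m) in
  let Lam := (1 + rho) / (2 * (1 - Delta) + alpha * m) in
  rsum n (fun a => (rsum n (fun j => Hhatinv W alpha d2f x a j * g j)) ^ 2)
  <= Lam ^ 2 * rsum n (fun j => g j ^ 2).
Proof.
  intros rho Lam; apply schur_test.
  - apply Hhatinv_nonneg.
  - apply Hhatinv_sym.
  - intros i Hi; apply Hhatinv_rowsum_le, Hi.
Qed.

End NewtonDirection.

(* The stepsize condition [eps Lam^2 <= 2 lam^2] lets the second-order term of a step be
   controlled by [lam^2] instead of [Lam^2]. *)
Lemma stepsize_second_order_le eps Lam lam K G Q :
  0 < eps -> 0 < Lam -> eps <= 2 * (lam / Lam) ^ 2 -> 0 <= K -> 0 <= G -> Q <= Lam ^ 2 * G ->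
  eps ^ 2 * K / 2 * Q <= eps * (lam ^ 2 * K) * G.
Proof.
  intros Heps HLam Hle HK HG HQ.
  assert (Heps' : eps * Lam ^ 2 <= 2 * lam ^ 2).
  { replace (2 * lam ^ 2) with (2 * (lam / Lam) ^ 2 * Lam ^ 2) by (field; lra).
    apply Rmult_le_compat_r; [apply pow2_ge_0|exact Hle]. }
  assert (HKG : 0 <= eps * K * G / 2) by (apply Rmult_le_pos; [repeat apply Rmult_le_pos|]; lra).
  apply Rle_trans with (eps * K * G / 2 * (eps * Lam ^ 2)).
  - replace (eps * K * G / 2 * (eps * Lam ^ 2)) with (eps ^ 2 * K / 2 * (Lam ^ 2 * G)) by field.
    apply Rmult_le_compat_l; [nra|exact HQ].
  - replace (eps * (lam ^ 2 * K) * G) with (eps * K * G / 2 * (2 * lam ^ 2)) by field.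
    apply Rmult_le_compat_l; auto.
Qed.

Section ExpectedDescent.

Variables (n : nat) (W : nat -> nat -> R) (alpha : R) (f df d2f : nat -> R -> R).
Variables (delta Delta m M eps : R).
Hypothesis n_pos : (1 <= n)%nat.
Hypothesis W_sym : forall i j, (i < n)%nat -> (j < n)%nat -> W i j = W j i.
Hypothesis W_nonneg : forall i j, (i < n)%nat -> (j < n)%nat -> 0 <= W i j.
Hypothesis W_rowsum : forall i, (i < n)%nat -> rsum n (fun j => W i j) = 1.
Hypothesis W_diag : forall i, (i < n)%nat -> delta <= W i i <= Delta.
Hypothesis delta_le_Delta : delta <= Delta.
Hypothesis Delta_lt_1 : Delta < 1.
Hypothesis alpha_pos : 0 < alpha.
Hypothesis f_deriv : forall i s, (i < n)%nat -> derivable_pt_lim (f i) s (df i s).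
Hypothesis df_deriv : forall i s, (i < n)%nat -> derivable_pt_lim (df i) s (d2f i s).
Hypothesis m_pos : 0 < m.
Hypothesis m_le_M : m <= M.
Hypothesis d2f_bound : forall i s, (i < n)%nat -> m <= d2f i s <= M.
Hypothesis eps_pos : 0 < eps.

Let rho := 2 * (1 - delta) / (2 * (1 - delta) + alpha * m).
Let Lam := (1 + rho) / (2 * (1 - Delta) + alpha * m).
Let lam := / (2 * (1 - delta) + alpha * M).

Hypothesis eps_le : eps <= 2 * (lam / Lam) ^ 2.

Local Notation F := (Fobj n W alpha f).
Local Notation grad := (gradF n W alpha df).
Local Notation newton_step := (ann_step n W alpha eps df d2f).

Lemma sum_step_le x :
  rsum n (fun a => F (newton_step x a))
  <= INR n * F x
     - eps * (lam * (1 - lam * (1 - delta + alpha * M))) * rsum n (fun i => grad x i ^ 2).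
Proof.
  set (K := 1 - delta + alpha * M); set (g := grad x); set (G := rsum n (fun j => g j ^ 2));
    set (d := newton_dir n W alpha df d2f x).
  assert (HaM : 0 < alpha * M) by nra.
  assert (Hlam : 0 < lam) by (apply Rinv_0_lt_compat; lra).
  assert (HLam : 0 < Lam).
  { assert (0 < rho) by (apply Rdiv_lt_0_compat; nra). apply Rdiv_lt_0_compat; nra. }
  assert (HG : 0 <= G) by (apply rsum_nonneg; intros; apply pow2_ge_0).
  assert (Hinner : lam * G <= rsum n (fun a => g a * d a))
    by (apply (newton_dir_inner_ge n W alpha d2f delta Delta m M); auto).
  assert (Hnorm : rsum n (fun a => d a ^ 2) <= Lam ^ 2 * G)
    by (apply (newton_dir_sqnorm_le n W alpha d2f delta Delta m M); auto).
  assert (Hsteps : rsum n (fun a => F (newton_step x a))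
                   <= rsum n (fun a => F x - eps * (g a * d a) + eps ^ 2 * K / 2 * d a ^ 2)).
  { apply rsum_le; intros a Ha.
    eapply Rle_trans; [apply (Fobj_step_le n W alpha f df d2f m M); auto|].
    pose proof (W_diag a Ha); pose proof (pow2_ge_0 (eps * d a)); unfold K; fold g d; nra. }
  rewrite rsum_plus, rsum_minus, rsum_const, rsum_scal_l, rsum_scal_l in Hsteps.
  pose proof (stepsize_second_order_le eps Lam lam K G _ eps_pos HLam eps_le
                ltac:(unfold K; lra) HG Hnorm).
  nra.
Qed.

Lemma expected_gap_contraction xstar : (forall y, F xstar <= F y) ->
  exists r, 0 <= r < 1 /\
    forall x, rsum n (fun a => F (newton_step x a) - F xstar) <= INR n * r * (F x - F xstar).
Proof.
  intros Hmin.
  set (c := lam * (1 - lam * (1 - delta + alpha * M))).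
  assert (HnR : 0 < INR n) by (apply lt_0_INR; lia).
  assert (Hc : 0 < c).
  { assert (Hlam : 0 < lam) by (apply Rinv_0_lt_compat; nra).
    assert (lam * (1 - delta + alpha * M) < 1).
    { unfold lam; apply (Rmult_lt_reg_l (2 * (1 - delta) + alpha * M)); [nra|].
      rewrite <- Rmult_assoc, Rinv_r by nra; lra. }
    unfold c; apply Rmult_lt_0_compat; lra. }
  set (r0 := 1 - eps * c * (2 * (alpha * m)) / INR n).
  exists (Rmax r0 (1 / 2)); split.
  { split; [apply Rle_trans with (1 / 2); [lra|apply Rmax_r]|].
    apply Rmax_lub_lt; [|lra].
    enough (0 < eps * c * (2 * (alpha * m)) / INR n) by (unfold r0; lra).
    apply Rdiv_lt_0_compat; [apply Rmult_lt_0_compat; [apply Rmult_lt_0_compat|]; nra|auto]. }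
  intros x; set (V := F x - F xstar); set (G := rsum n (fun i => grad x i ^ 2)).
  assert (HV : 0 <= V) by (unfold V; pose proof (Hmin x); lra).
  assert (HPL : 2 * (alpha * m) * V <= G).
  { pose proof (Fobj_gap_le_grad_sqnorm n W alpha f df d2f m M W_sym W_nonneg W_rowsum
                  alpha_pos f_deriv df_deriv m_pos d2f_bound x xstar) as H; fold G in H.
    apply (Rmult_le_reg_l (/ (2 * (alpha * m)))); [apply Rinv_0_lt_compat; nra|].
    rewrite <- Rmult_assoc, Rinv_l by nra; unfold V; lra. }
  pose proof (sum_step_le x) as Hsum; fold c G in Hsum.
  rewrite rsum_minus, rsum_const.
  assert (INR n * r0 * V <= INR n * Rmax r0 (1 / 2) * V).
  { apply Rmult_le_compat_r; auto; apply Rmult_le_compat_l; [lra|apply Rmax_l]. }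
  assert (INR n * r0 * V = INR n * V - eps * c * (2 * (alpha * m)) * V)
    by (unfold r0; field; lra).
  assert (eps * c * (2 * (alpha * m) * V) <= eps * c * G)
    by (apply Rmult_le_compat_l; [apply Rmult_le_pos|]; lra).
  unfold V in *; nra.
Qed.

End ExpectedDescent.

Section PathCoding.

Variable n : nat.

(* A path [om 0, ..., om (t-1)] of agents is coded little-endian in base [n]. *)
Fixpoint path_code (t : nat) (om : nat -> nat) : nat :=
  match t with O => O | S t' => (om t' * n ^ t' + path_code t' om)%nat end.

Fixpoint code_prefix (t j : nat) : list nat :=
  match t with O => nil | S t' => code_prefix t' (j mod n ^ t') ++ (j / n ^ t')%nat :: nil end.

Fixpoint iter_code (st : (nat -> R) -> nat -> (nat -> R)) (x : nat -> R) (t j : nat) : nat -> R :=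
  match t with O => x | S t' => st (iter_code st x t' (j mod n ^ t')) (j / n ^ t')%nat end.

Lemma code_prefix_length t j : length (code_prefix t j) = t.
Proof.
  revert j; induction t as [|t IH]; intros j; simpl; [reflexivity|].
  rewrite length_app, IH; simpl; lia.
Qed.

Hypothesis n_pos : (1 <= n)%nat.

Lemma div_mod_top_digit t a c : (c < n ^ t)%nat ->
  ((a * n ^ t + c) / n ^ t = a)%nat /\ ((a * n ^ t + c) mod n ^ t = c)%nat.
Proof.
  intros Hc; assert (n ^ t <> 0)%nat by (apply Nat.pow_nonzero; lia); split.
  - rewrite Nat.div_add_l, Nat.div_small by auto; lia.
  - rewrite Nat.add_comm, Nat.Div0.mod_add; apply Nat.mod_small; auto.
Qed.

Section Path.

Variable om : nat -> nat.
Hypothesis om_lt : forall k, (om k < n)%nat.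

Lemma path_code_lt t : (path_code t om < n ^ t)%nat.
Proof.
  induction t as [|t IH]; simpl; [lia|].
  pose proof (om_lt t); nia.
Qed.

Lemma path_code_top_digit t :
  (path_code (S t) om / n ^ t = om t)%nat /\ (path_code (S t) om mod n ^ t = path_code t om)%nat.
Proof. apply div_mod_top_digit, path_code_lt. Qed.

Lemma in_cyl_code_prefix t : in_cyl (code_prefix t (path_code t om)) om.
Proof.
  induction t as [|t IH]; unfold in_cyl in *; simpl; [intros; lia|].
  destruct (path_code_top_digit t) as [Hdiv Hmod]; simpl in Hdiv, Hmod; rewrite Hdiv, Hmod.
  intros k Hk; rewrite length_app, code_prefix_length in Hk; simpl in Hk.
  destruct (Nat.eq_dec k t) as [->|Hne].
  - rewrite app_nth2; rewrite code_prefix_length; [|lia].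
    rewrite Nat.sub_diag; reflexivity.
  - rewrite app_nth1; [apply IH|]; rewrite code_prefix_length; lia.
Qed.

Lemma iter_code_path st x (X : nat -> nat -> R) :
  X O = x -> (forall t, X (S t) = st (X t) (om t)) ->
  forall t, X t = iter_code st x t (path_code t om).
Proof.
  intros H0 HS t; induction t as [|t IH]; simpl; [exact H0|].
  destruct (path_code_top_digit t) as [Hdiv Hmod]; simpl in Hdiv, Hmod.
  rewrite HS, Hdiv, Hmod, IH; reflexivity.
Qed.

End Path.

Lemma sum_iter_code_le st (V : (nat -> R) -> R) r x t :
  (forall y, 0 <= V y) -> 0 <= r ->
  (forall y, rsum n (fun a => V (st y a)) <= INR n * r * V y) ->
  rsum (n ^ t) (fun j => V (iter_code st x t j)) <= (INR n * r) ^ t * V x.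
Proof.
  intros HV Hr Hst; induction t as [|t IH]; simpl; [lra|].
  rewrite rsum_mul.
  rewrite (rsum_ext _ _ (fun a => rsum (n ^ t) (fun j => V (st (iter_code st x t j) a)))).
  - rewrite rsum_swap.
    apply Rle_trans with (rsum (n ^ t) (fun j => INR n * r * V (iter_code st x t j))).
    + apply rsum_le; intros; apply Hst.
    + rewrite rsum_scal_l.
      assert (0 <= INR n * r) by (apply Rmult_le_pos; [apply pos_INR|auto]); nra.
  - intros a _; apply rsum_ext; intros j Hj.
    destruct (div_mod_top_digit t a j Hj) as [Hdiv Hmod]; simpl; rewrite Hdiv, Hmod; reflexivity.
Qed.

(* Indices [k] of a cover are grouped in consecutive blocks: block [v] (counted from [u0])
   has [n ^ (T + u0 + v)] slots, one for each path code of length [T + u0 + v]. *)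
Fixpoint block_start (T u0 v : nat) : nat :=
  match v with O => O | S v' => (n ^ (T + u0) + block_start T (S u0) v')%nat end.

Fixpoint block_decode (T fuel u k : nat) : nat * nat :=
  match fuel with
  | O => (u, k)
  | S fuel' => if Nat.ltb k (n ^ (T + u)) then (u, k)
               else block_decode T fuel' (S u) (k - n ^ (T + u))%nat
  end.

Lemma block_decode_start T v : forall u0 j fuel,
  (j < n ^ (T + (u0 + v)))%nat -> (v < fuel)%nat ->
  block_decode T fuel u0 (block_start T u0 v + j) = ((u0 + v)%nat, j).
Proof.
  induction v as [|v IH]; intros u0 j fuel Hj Hf; destruct fuel as [|fuel]; try lia; simpl.
  - rewrite Nat.add_0_r in *; destruct (Nat.ltb_spec j (n ^ (T + u0))); [reflexivity|lia].
  - destruct (Nat.ltb_spec (n ^ (T + u0) + block_start T (S u0) v + j) (n ^ (T + u0))); [lia|].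
    replace (n ^ (T + u0) + block_start T (S u0) v + j - n ^ (T + u0))%nat
      with (block_start T (S u0) v + j)%nat by lia.
    rewrite IH by (try replace (T + (S u0 + v))%nat with (T + (u0 + S v))%nat by lia; auto; lia).
    f_equal; lia.
Qed.

Lemma block_start_ge T u0 v : (v <= block_start T u0 v)%nat.
Proof.
  revert u0; induction v as [|v IH]; intros u0; simpl; [lia|].
  pose proof (IH (S u0)); assert (n ^ (T + u0) <> 0)%nat by (apply Nat.pow_nonzero; lia); lia.
Qed.

Lemma block_start_succ T v : forall u0,
  block_start T u0 (S v) = (block_start T u0 v + n ^ (T + (u0 + v)))%nat.
Proof.
  induction v as [|v IH]; intros u0; [simpl; rewrite !Nat.add_0_r; reflexivity|].
  change (block_start T u0 (S (S v))) with (n ^ (T + u0) + block_start T (S u0) (S v))%nat.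
  rewrite IH; cbn [block_start].
  replace (T + (S u0 + v))%nat with (T + (u0 + S v))%nat by lia; lia.
Qed.

(* Slots that are not needed still hold some cylinder; one of length [2 t] has measure
   [n ^ (- 2 t)], so the [n ^ t] slots of a block cost at most [n ^ (- t)] together. *)
Definition cyl_slot (bad : nat -> nat -> bool) (t j : nat) : list nat :=
  if bad t j then code_prefix t j else repeat O (2 * t).

Definition cover (T : nat) (bad : nat -> nat -> bool) (k : nat) : list nat :=
  let p := block_decode T (S k) O k in cyl_slot bad (T + fst p) (snd p).

Lemma cover_block T bad u j : (j < n ^ (T + u))%nat ->
  cover T bad (block_start T O u + j) = cyl_slot bad (T + u) j.
Proof.
  intros Hj; unfold cover; rewrite (block_decode_start T u O j); [reflexivity|exact Hj|].
  pose proof (block_start_ge T O u); lia.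
Qed.

Lemma rsum_cover T bad U (mass : list nat -> R) :
  rsum (block_start T O U) (fun k => mass (cover T bad k)) =
  rsum U (fun u => rsum (n ^ (T + u)) (fun j => mass (cyl_slot bad (T + u) j))).
Proof.
  induction U as [|U IH]; [reflexivity|].
  rewrite block_start_succ, rsum_add, IH; cbn [rsum]; f_equal.
  apply rsum_ext; intros j Hj; rewrite cover_block; auto.
Qed.

End PathCoding.

Lemma exists_late_above_geometric (v : nat -> R) th : (forall t, 0 <= v t) -> 0 < th < 1 ->
  ~ Un_cv v 0 -> forall T, exists t, (T <= t)%nat /\ th ^ t < v t.
Proof.
  intros Hv Hth Hncv T; apply NNPP; intros Hno; apply Hncv; intros e He.
  destruct (pow_lt_1_zero th ltac:(rewrite Rabs_pos_eq; lra) e He) as [N HN].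
  exists (Nat.max N T); intros t Ht; unfold R_dist; rewrite Rminus_0_r, Rabs_pos_eq by auto.
  assert (v t <= th ^ t) by (apply Rnot_lt_le; intros Hlt; apply Hno; exists t; split; [lia|auto]).
  specialize (HN t ltac:(lia)); rewrite Rabs_pos_eq in HN by (apply pow_le; lra); lra.
Qed.

Lemma exists_geometric_tails_le q p c e : 0 <= q < 1 -> 0 <= p < 1 -> 0 <= c -> 0 < e ->
  exists T, q ^ T * c / (1 - q) + p ^ T / (1 - p) <= e.
Proof.
  intros Hq Hp Hc He.
  destruct (pow_lt_1_zero q ltac:(rewrite Rabs_pos_eq; lra) (e / 2 * (1 - q) / (c + 1)))
    as [T1 HT1].
  { apply Rdiv_lt_0_compat; [apply Rmult_lt_0_compat|]; lra. }
  destruct (pow_lt_1_zero p ltac:(rewrite Rabs_pos_eq; lra) (e / 2 * (1 - p))) as [T2 HT2].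
  { apply Rmult_lt_0_compat; lra. }
  exists (Nat.max T1 T2).
  specialize (HT1 (Nat.max T1 T2) ltac:(lia)); specialize (HT2 (Nat.max T1 T2) ltac:(lia)).
  rewrite Rabs_pos_eq in HT1, HT2 by (apply pow_le; lra).
  set (qT := q ^ Nat.max T1 T2) in *; set (pT := p ^ Nat.max T1 T2) in *.
  assert (qT * c / (1 - q) <= e / 2).
  { apply (Rmult_le_reg_r (1 - q)); [lra|].
    unfold Rdiv; rewrite Rmult_assoc, Rinv_l, Rmult_1_r by lra.
    apply Rle_trans with (e / 2 * (1 - q) / (c + 1) * c); [apply Rmult_le_compat_r; lra|].
    apply (Rmult_le_reg_r (c + 1)); [lra|].
    replace (e / 2 * (1 - q) / (c + 1) * c * (c + 1)) with (e / 2 * (1 - q) * c) by (field; lra).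
    assert (0 <= e / 2 * (1 - q)) by (apply Rmult_le_pos; lra); nra. }
  assert (pT / (1 - p) <= e / 2).
  { apply (Rmult_le_reg_r (1 - p)); [lra|]; unfold Rdiv.
    rewrite Rmult_assoc, Rinv_l, Rmult_1_r by lra; lra. }
  lra.
Qed.

Section AlmostSureConvergence.

Variables (n : nat) (st : (nat -> R) -> nat -> (nat -> R)) (V : (nat -> R) -> R).
Variables (r th : R) (x0 : nat -> R).
Hypothesis n_ge_2 : (2 <= n)%nat.
Hypothesis V_nonneg : forall y, 0 <= V y.
Hypothesis r_nonneg : 0 <= r.
Hypothesis r_lt_th : r < th.
Hypothesis th_lt_1 : th < 1.
Hypothesis V_contract : forall y, rsum n (fun a => V (st y a)) <= INR n * r * V y.

(* Markov's inequality at the threshold [th ^ t]: the paths with [V (x t) > th ^ t]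
   have probability at most [(r / th) ^ t V x0], which is summable in [t]. *)
Let bad (t j : nat) : bool :=
  if Rlt_dec (th ^ t) (V (iter_code n st x0 t j)) then true else false.

Let n_pos : (1 <= n)%nat.
Proof. lia. Qed.

Let ratio_bound : 0 <= r / th < 1.
Proof.
  split; [apply Rmult_le_pos; [|apply Rlt_le, Rinv_0_lt_compat]; lra|].
  apply (Rmult_lt_reg_r th); [lra|]; unfold Rdiv; rewrite Rmult_assoc, Rinv_l; lra.
Qed.

Let INR_n_ge_2 : 2 <= INR n.
Proof. replace 2 with (INR 2) by (simpl; ring); apply le_INR; auto. Qed.

Let inv_n_bound : 0 < / INR n <= / 2.
Proof. split; [apply Rinv_0_lt_compat|apply Rinv_le_contravar]; lra. Qed.

Lemma slot_mass_le t :
  rsum (n ^ t) (fun j => (/ INR n) ^ length (cyl_slot n bad t j))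
  <= (r / th) ^ t * V x0 + (/ INR n) ^ t.
Proof.
  set (p := / INR n).
  assert (Hnp : INR n * p = 1) by (unfold p; field; lra).
  assert (Hpt : 0 < p ^ t) by (apply pow_lt; unfold p; lra).
  assert (Htt : 0 < th ^ t) by (apply pow_lt; lra).
  set (c := p ^ t / th ^ t).
  assert (Hc : 0 < c) by (apply Rdiv_lt_0_compat; auto).
  apply Rle_trans with (rsum (n ^ t) (fun j => c * V (iter_code n st x0 t j) + p ^ t * p ^ t)).
  { apply rsum_le; intros j Hj; unfold cyl_slot.
    pose proof (V_nonneg (iter_code n st x0 t j)); assert (0 <= p ^ t * p ^ t) by nra.
    destruct (bad t j) eqn:Hbad.
    - rewrite code_prefix_length.
      assert (th ^ t < V (iter_code n st x0 t j))
        by (unfold bad in Hbad; destruct (Rlt_dec _ _); [auto|discriminate]).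
      enough (p ^ t <= c * V (iter_code n st x0 t j)) by lra.
      unfold c, Rdiv; rewrite Rmult_assoc, <- (Rmult_1_r (p ^ t)) at 1.
      apply Rmult_le_compat_l; [lra|].
      apply (Rmult_le_reg_l (th ^ t)); auto; rewrite <- Rmult_assoc, Rinv_r; lra.
    - rewrite repeat_length; replace (2 * t)%nat with (t + t)%nat by lia; rewrite pow_add; nra. }
  rewrite rsum_plus, rsum_scal_l, rsum_const, pow_INR.
  pose proof (sum_iter_code_le n n_pos st V r x0 t V_nonneg r_nonneg V_contract).
  replace (INR n ^ t * (p ^ t * p ^ t)) with ((INR n * p) ^ t * p ^ t)
    by (rewrite Rpow_mult_distr; ring).
  rewrite Hnp, pow1, Rmult_1_l; apply Rplus_le_compat_r.
  replace ((r / th) ^ t * V x0) with (c * ((INR n * r) ^ t * V x0)).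
  - apply Rmult_le_compat_l; lra.
  - unfold c; rewrite <- (Rmult_1_l r) at 2; rewrite <- Hnp.
    unfold Rdiv; rewrite !Rpow_mult_distr, !pow_inv; field; lra.
Qed.

Lemma cover_mass_le T N :
  rsum N (fun k => (/ INR n) ^ length (cover n T bad k))
  <= (r / th) ^ T * V x0 / (1 - r / th) + (/ INR n) ^ T / (1 - / INR n).
Proof.
  set (p := / INR n); set (q := r / th).
  apply Rle_trans with (rsum (block_start n T O N) (fun k => p ^ length (cover n T bad k))).
  { apply rsum_le_len; [apply block_start_ge; auto|intros; apply pow_le; unfold p; lra]. }
  rewrite (rsum_cover n n_pos T bad N (fun l => p ^ length l)); cbv beta.
  apply Rle_trans with (rsum N (fun u => q ^ T * V x0 * q ^ u + p ^ T * p ^ u)).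
  { apply rsum_le; intros u _; eapply Rle_trans; [apply slot_mass_le|].
    rewrite !pow_add; right; fold p q; ring. }
  rewrite rsum_plus, !rsum_scal_l.
  pose proof (rsum_geom_le q N ratio_bound); pose proof (rsum_geom_le p N ltac:(unfold p; lra)).
  assert (0 <= q ^ T * V x0) by (apply Rmult_le_pos; [apply pow_le; unfold q; lra|auto]).
  assert (0 <= p ^ T) by (apply pow_le; unfold p; lra).
  unfold Rdiv; apply Rplus_le_compat; apply Rmult_le_compat_l; auto.
Qed.

Lemma cover_catches_bad_path T om t : (forall k, (om k < n)%nat) -> (T <= t)%nat ->
  th ^ t < V (iter_code n st x0 t (path_code n t om)) ->
  exists k, in_cyl (cover n T bad k) om.
Proof.
  intros Hom Ht Hbig; exists (block_start n T O (t - T) + path_code n t om)%nat.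
  rewrite cover_block by (auto; replace (T + (t - T))%nat with t by lia; apply path_code_lt; auto).
  replace (T + (t - T))%nat with t by lia; unfold cyl_slot, bad.
  destruct (Rlt_dec _ _); [apply in_cyl_code_prefix; auto|contradiction].
Qed.

Theorem expected_contraction_as_cvg (X : (nat -> nat) -> nat -> (nat -> R)) :
  (forall om, X om O = x0) -> (forall om t, X om (S t) = st (X om t) (om t)) ->
  almost_surely n (fun om => Un_cv (fun t => V (X om t)) 0).
Proof.
  intros H0 HS e He.
  destruct (exists_geometric_tails_le (r / th) (/ INR n) (V x0) e ratio_bound
              ltac:(lra) (V_nonneg x0) He) as [T HT].
  exists (cover n T bad); split.
  - intros om Hom Hncv.
    destruct (exists_late_above_geometric (fun t => V (X om t)) th
                (fun t => V_nonneg _) ltac:(lra) Hncv T) as [t [Ht Hbig]].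
    rewrite (iter_code_path n n_pos om Hom st x0 (X om) (H0 om) (HS om)) in Hbig.
    apply (cover_catches_bad_path T om t); auto.
  - intros N; eapply Rle_trans; [apply cover_mass_le|exact HT].
Qed.

End AlmostSureConvergence.

Lemma two_le_size_of_stochastic n (W : nat -> nat -> R) : (1 <= n)%nat ->
  (forall i, (i < n)%nat -> rsum n (fun j => W i j) = 1) ->
  (forall i j, (i < n)%nat -> (j < n)%nat -> W i j < 1) -> (2 <= n)%nat.
Proof.
  intros Hn Hrow Hlt; destruct (Nat.eq_dec n 1) as [->|]; [|lia].
  specialize (Hrow O ltac:(lia)); specialize (Hlt O O ltac:(lia) ltac:(lia)); simpl in Hrow; lra.
Qed.

Lemma unif_null_mono n (A B : (nat -> nat) -> Prop) :
  (forall om, A om -> B om) -> unif_null n B -> unif_null n A.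
Proof.
  intros HAB HB e He; destruct (HB e He) as [c [Hcov Hmass]].
  exists c; split; [intros om Hom HA; apply Hcov, HAB; auto|exact Hmass].
Qed.

Lemma Un_cv_of_sub_cv_0 (u : nat -> R) l : Un_cv (fun t => u t - l) 0 -> Un_cv u l.
Proof.
  intros H e He; destruct (H e He) as [N HN]; exists N; intros t Ht.
  specialize (HN t Ht); unfold R_dist in *; rewrite Rminus_0_r in HN; exact HN.
Qed.

Theorem theorem4p4
  (n : nat) (alpha : R) (W : nat -> nat -> R)
  (delta Delta m M L : R)
  (f df d2f : nat -> R -> R)
  (x0 xstar : nat -> R) (eps : R) :
  (1 <= n)%nat ->
  0 < alpha ->
  (forall i j, (i < n)%nat -> (j < n)%nat -> W i j = W j i) ->
  (forall i j, (i < n)%nat -> (j < n)%nat -> 0 <= W i j < 1) ->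
  (forall i, (i < n)%nat -> rsum n (fun j => W i j) = 1) ->
  (forall v : nat -> R, (forall i, (i < n)%nat -> lapl n W v i = 0) ->
     exists c, forall i, (i < n)%nat -> v i = c) ->
  0 < delta -> delta <= Delta -> Delta < 1 ->
  (forall i, (i < n)%nat -> delta <= W i i <= Delta) ->
  (forall i s, (i < n)%nat -> derivable_pt_lim (f i) s (df i s)) ->
  (forall i s, (i < n)%nat -> derivable_pt_lim (df i) s (d2f i s)) ->
  (forall i s, (i < n)%nat -> continuity_pt (d2f i) s) ->
  0 < m -> m <= M ->
  (forall i s, (i < n)%nat -> m <= d2f i s <= M) ->
  (forall i a b, (i < n)%nat -> Rabs (d2f i a - d2f i b) <= L * Rabs (a - b)) ->
  (forall y, Fobj n W alpha f xstar <= Fobj n W alpha f y) ->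
  let rho := 2 * (1 - delta) / (2 * (1 - delta) + alpha * m) in
  let Lam := (1 + rho) / (2 * (1 - Delta) + alpha * m) in
  let lam := / (2 * (1 - delta) + alpha * M) in
  0 < eps -> eps <= 2 * (lam / Lam) ^ 2 ->
  almost_surely n (fun omega =>
    Un_cv (fun t => Fobj n W alpha f (ann_iter n W alpha eps df d2f x0 omega t))
          (Fobj n W alpha f xstar)).
Proof.
  intros Hn Halpha Hsym HW Hrow _ _ HdD HD1 Hdiag Hf Hdf _ Hm HmM Hd2f _ Hstar rho Lam lam
    Heps Heps_le.
  assert (HWnn : forall i j, (i < n)%nat -> (j < n)%nat -> 0 <= W i j)
    by (intros; apply HW; auto).
  assert (Hn2 : (2 <= n)%nat)
    by (apply (two_le_size_of_stochastic n W); auto; intros; apply HW; auto).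
  destruct (expected_gap_contraction n W alpha f df d2f delta Delta m M eps Hn Hsym HWnn Hrow
              Hdiag HdD HD1 Halpha Hf Hdf Hm HmM Hd2f Heps Heps_le xstar Hstar)
    as [r [Hr Hcontr]].
  set (F := Fobj n W alpha f).
  apply (unif_null_mono n _ (fun om => ~ Un_cv (fun t => F (ann_iter n W alpha eps df d2f x0 om t)
                                                            - F xstar) 0)).
  { intros om Hncv Hcv; apply Hncv, Un_cv_of_sub_cv_0, Hcv. }
  apply (expected_contraction_as_cvg n (ann_step n W alpha eps df d2f) (fun y => F y - F xstar)
           r ((1 + r) / 2) x0); auto; try lra.
  intros y; pose proof (Hstar y); unfold F; lra.
Qed.
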